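(* Let $E$ be a finite set with $\sigma$-algebra $\mathcal{E}=2^E$, and let $\mathcal{P}(E)$ denote the set of probability measures on $E$. Suppose that for every $\mu\in\mathcal{P}(E)$ a transition kernel $P_\mu(x,B)$ is given, and for $\mu\in\mathcal{P}(E)$ let $(X^\mu_n)_{n\in\mathbb{Z}_+}$ be the nonlinear Markov chain with $\mathrm{Law}(X_0^\mu)=\mu$ and $\mathbb{P}(X^\mu_{n+1}\in B\mid X^\mu_n=x)=P_{\mu_n}(x,B)$, where $\mu_n:=\mathrm{Law}(X_n^\mu)$ (so $\mu_{n+1}=\int_E P_{\mu_n}(x,\cdot)\mu_n(dx)$). Fix an integer $k\ge1$ and let $Q_\mu(x,dy)=\int P_\mu(x,dx_1)P_{\mu_1}(x_1,dx_2)\cdots P_{\mu_{k-1}}(x_{k-1},dy)$ be the $k$-step kernel. Assume: (i) there is $\alpha_k\in(0,1)$ with $\sup_{\mu,\nu\in\mathcal{P}(E)}\|Q_\mu(x,\cdot)-Q_\nu(y,\cdot)\|_{TV}\le 2(1-\alpha_k)$ for all $x,y\in E$; (ii) there is $\lambda_k\in[0,\alpha_k]$ with $\|Q_\mu(x,\cdot)-Q_\nu(x,\cdot)\|_{TV}\le\lambda_k\|\mu-\nu\|_{TV}$ for all $x\in E$, $\mu,\nu\in\mathcal{P}(E)$; (iii) there is $\lambda_1<\infty$ with $\|P_\mu(x,\cdot)-P_\nu(x,\cdot)\|_{TV}\le\lambda_1\|\mu-\nu\|_{TV}$ for all $x\in E$, $\mu,\nu\in\mathcal{P}(E)$. (Under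 these conditions there is a unique invariant measure $\pi$, i.e. $\pi P_\pi=\pi$.) Let $g:E\to\mathbb{R}$ be bounded, and for a fixed initial measure $\mu$ put $S_n=\sum_{j=0}^{n-1}g(X_j^\mu)$. Then, as $n\to\infty$, $$\frac{S_n}{n}\xrightarrow{\ \mathbb{P}\ }\mathbb{E}[g(X_0^\pi)]=\int_E g(x)\,\pi(dx),$$ where $X^\pi$ denotes the chain started from the invariant measure $\pi$.
   Context: The total variation distance is $\|\mu-\nu\|_{TV}=2\sup_{A\in\mathcal{E}}|\mu(A)-\nu(A)|$. Convergence $\xrightarrow{\mathbb{P}}$ is convergence in probability. *)

From HB Require Import structures.
From mathcomp Require Import all_boot all_order all_algebra.
From mathcomp Require Import all_classical all_reals all_analysis.
Set Implicit Arguments. Unset Strict Implicit. Unset Printing Implicit Defensive.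
Import Order.TTheory GRing.Theory Num.Theory.
Local Open Scope ring_scope.
Local Open Scope classical_set_scope.

(* Probability measures on a finite set E (sigma-algebra 2^E), represented
   by their mass functions E -> R. *)
Definition is_prob (R : realType) (E : finType) (mu : E -> R) : Prop :=
  (forall x, 0 <= mu x) /\ \sum_(x : E) mu x = 1.

Definition tv (R : realType) (E : finType) (mu nu : E -> R) : R :=
  2 * \big[Num.max/0]_(A : {set E}) `| \sum_(x in A) mu x - \sum_(x in A) nu x |.

(* A family of transition kernels indexed by measures: Pk mu x y = P_mu(x,{y}). *)
Definition nl_kernel (R : realType) (E : finType) := (E -> R) -> E -> E -> R.

Fixpoint flow (R : realType) (E : finType) (Pk : nl_kernel R E) (mu : E -> R) (n : nat)
  : E -> R :=
  match n with
  | 0 => mu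
  | n'.+1 => fun y => \sum_(x : E) flow Pk mu n' x * Pk (flow Pk mu n') x y
  end.

Fixpoint kstep (R : realType) (E : finType) (Pk : nl_kernel R E) (mu : E -> R) (j : nat)
  : E -> E -> R :=
  match j with
  | 0 => fun x y => if x == y then 1 else 0
  | j'.+1 => fun x y => \sum_(z : E) kstep Pk mu j' x z * Pk (flow Pk mu j') z y
  end.

Definition nl_invariant (R : realType) (E : finType) (Pk : nl_kernel R E) (pi : E -> R) : Prop :=
  is_prob pi /\ forall y, \sum_(x : E) pi x * Pk pi x y = pi y.

Definition nl_markov_chain (R : realType) (E : finType) (Pk : nl_kernel R E) (mu : E -> R)
  (d : measure_display) (T : measurableType d) (P : probability T R) (X : nat -> T -> E)
  : Prop :=
  forall (n : nat) (xs : nat -> E),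
    measurable [set w | forall i, (i <= n)%N -> X i w = xs i] /\
    P [set w | forall i, (i <= n)%N -> X i w = xs i] =
      (mu (xs 0%N) * \prod_(i < n) Pk (flow Pk mu i) (xs i) (xs i.+1))%:E.

Arguments is_prob {R E} mu.
Arguments tv {R E} mu nu.
Arguments flow {R E} Pk mu n _.
Arguments kstep {R E} Pk mu j _ _.
Arguments nl_invariant {R E} Pk pi.
Arguments nl_markov_chain {R E} Pk mu {d T} P X.

From HB Require Import structures.
From mathcomp Require Import all_boot all_order all_algebra.
From mathcomp Require Import all_classical all_reals all_analysis.
From mathcomp Require Import ring lra.
Set Implicit Arguments. Unset Strict Implicit. Unset Printing Implicit Defensive.
Import Order.TTheory GRing.Theory Num.Theory.
Local Open Scope ring_scope.

(* Chebyshev's inequality reduces the claim to the decay of the mean covariance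
   (1/n^2) sum_(i,j<n) E[h(X_i) h(X_j)] of h := g - pi(g).  For i <= j the Markov
   property gives E[h(X_i) h(X_j)] = sum_x mu_i(x) h(x) (Q^(j-i) h)(x) with the
   time-inhomogeneous kernel Q^(l) := P_(mu_i) ... P_(mu_(i+l-1)), and we split
   Q^(l)(x, .) = mu_j + (Q^(l)(x, .) - mu_j).  By (i) and Dobrushin's coupling of the
   common part of two measures, ||Q^(l)(x, .) - mu_j|| <= 2 (1 - alpha)^(l/k); and
   mu_j(h) = (mu_j - pi)(g).  Hence the covariance is at most
   2 |h|^2 (1 - alpha)^((j-i)/k) + |h| |g| ||mu_j - pi||.  The same coupling, now with (ii),
   gives ||mu_(n+k) - pi|| <= ||mu_n - pi|| - alpha/2 ||mu_n - pi||^2, so mu_n -> pi,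
   the covariance bound tends to 0, and so does its Cesaro mean. *)

Section FiniteMeasures.
Variables (R : realType) (E : finType).
Implicit Types (f g u v : E -> R) (K L : E -> E -> R).

Definition l1norm f : R := \sum_z `|f z|.

Definition push u K : E -> R := fun z => \sum_x u x * K x z.

Definition dirac_mass (x : E) : E -> R := fun y => if x == y then 1 else 0.

Definition stochastic K := forall x, is_prob (K x).

Lemma l1norm_ge0 f : 0 <= l1norm f.
Proof. exact: sumr_ge0. Qed.

Lemma eq_l1norm f g : f =1 g -> l1norm f = l1norm g.
Proof. by move=> fg; apply: eq_bigr => z _; rewrite fg. Qed.

Lemma ler_norm_l1norm f x : `|f x| <= l1norm f.
Proof. by rewrite /l1norm (bigD1 x) //= lerDl sumr_ge0. Qed.

Lemma l1normD f g : l1norm (f \+ g) <= l1norm f + l1norm g.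
Proof. by rewrite /l1norm -big_split; apply: ler_sum => z _; apply: ler_normD. Qed.

Lemma l1normZ c f : l1norm (fun z => c * f z) = `|c| * l1norm f.
Proof. by rewrite /l1norm mulr_sumr; apply: eq_bigr => z _; rewrite normrM. Qed.

Lemma l1norm_sum (I : finType) (F : I -> E -> R) :
  l1norm (fun z => \sum_i F i z) <= \sum_i l1norm (F i).
Proof. by rewrite /l1norm exchange_big; apply: ler_sum => z _; apply: ler_norm_sum. Qed.

Lemma l1norm_prob u : is_prob u -> l1norm u = 1.
Proof. by move=> [u0 <-]; apply: eq_bigr => z _; rewrite ger0_norm. Qed.

Lemma l1normB_le2 u v : is_prob u -> is_prob v -> l1norm (u \- v) <= 2.
Proof.
move=> pu pv; apply: le_trans (l1normD u (fun z => - v z)) _.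
rewrite (@eq_l1norm (fun z => - v z) (fun z => -1 * v z)) => [|z]; last by rewrite mulN1r.
by rewrite l1normZ normrN1 mul1r !l1norm_prob.
Qed.

Lemma ler_norm_sum_l1norm f g B : (forall y, `|g y| <= B) ->
  `|\sum_y f y * g y| <= l1norm f * B.
Proof.
move=> gB; apply: le_trans (ler_norm_sum _ _ _) _.
by rewrite /l1norm mulr_suml; apply: ler_sum => y _; rewrite normrM ler_wpM2l.
Qed.

Lemma tv_l1norm u v : \sum_z u z = \sum_z v z -> tv u v = l1norm (u \- v).
Proof.
move=> uv; set d := u \- v.
have d0 : \sum_z d z = 0 by rewrite /d /= sumrB uv subrr.
pose p z := if 0 < d z then d z else 0.
have l1d : l1norm d = 2 * \sum_z p z.
  have -> : l1norm d = \sum_z (2 * p z - d z).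
    apply: eq_bigr => z _; rewrite /p.
    by case: ltP => dz; [rewrite gtr0_norm|rewrite ler0_norm]; lra.
  by rewrite sumrB d0 subr0 -mulr_sumr.
have dA (A : {set E}) : `|\sum_(z in A) u z - \sum_(z in A) v z| <= \sum_z p z.
  rewrite -sumrB big_mkcond ler_norml; apply/andP; split.
    have -> : \sum_z p z = \sum_z (p z - d z) by rewrite sumrB d0 subr0.
    rewrite -sumrN; apply: ler_sum => z _.
    by rewrite /p /d /=; case: (z \in A); case: ltP => /=; lra.
  by apply: ler_sum => z _; rewrite /p /d /=; case: (z \in A); case: ltP => /=; lra.
rewrite /tv l1d; congr (2 * _); apply/le_anti/andP; split.
  apply: bigmax_le => [|A _]; last exact: dA.
  by apply: sumr_ge0 => z _; rewrite /p; case: ltP => // /ltW.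
apply: le_trans (le_bigmax _ _ [set z | 0 < d z]).
rewrite -sumrB ger0_norm; last by apply: sumr_ge0 => z; rewrite inE => /ltW.
by rewrite [leRHS]big_mkcond; apply: ler_sum => z _; rewrite inE /p; case: ltP.
Qed.

Lemma tv_l1normP u v : is_prob u -> is_prob v -> tv u v = l1norm (u \- v).
Proof. by move=> [_ u1] [_ v1]; apply: tv_l1norm; rewrite u1 v1. Qed.

Lemma dirac_mass_prob x : is_prob (dirac_mass x).
Proof.
split=> [y|]; first by rewrite /dirac_mass; case: ifP.
by rewrite (bigD1 x) //= /dirac_mass eqxx big1 ?addr0 // => y /negbTE; rewrite eq_sym => ->.
Qed.

Lemma push_dirac_mass x K : push (dirac_mass x) K = K x.
Proof.
apply: funext => z; rewrite /push (bigD1 x) //= /dirac_mass eqxx mul1r big1 ?addr0 //.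
by move=> y /negbTE; rewrite eq_sym => ->; rewrite mul0r.
Qed.

Lemma push_dirac u : push u dirac_mass = u.
Proof.
apply: funext => y; rewrite /push (bigD1 y) //= /dirac_mass eqxx mulr1 big1 ?addr0 //.
by move=> x /negbTE ->; rewrite mulr0.
Qed.

Lemma pushA u K L : push (push u K) L = push u (fun x => push (K x) L).
Proof.
apply: funext => z; rewrite /push; under eq_bigr do rewrite mulr_suml.
rewrite exchange_big; apply: eq_bigr => x _; rewrite mulr_sumr.
by apply: eq_bigr => y _; rewrite mulrA.
Qed.

Lemma pushD u v K : push (u \+ v) K = push u K \+ push v K.
Proof.
by apply: funext => z; rewrite /push /= -big_split; apply: eq_bigr => x _; rewrite mulrDl.
Qed.

Lemma pushB u v K : push (u \- v) K = push u K \- push v K.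
Proof.
by apply: funext => z; rewrite /push /= -sumrB; apply: eq_bigr => x _; rewrite mulrBl.
Qed.

Lemma sum_push u K : stochastic K -> \sum_z push u K z = \sum_x u x.
Proof.
move=> sK; rewrite /push exchange_big; apply: eq_bigr => x _.
by rewrite -mulr_sumr (proj2 (sK x)) mulr1.
Qed.

Lemma push_prob u K : stochastic K -> is_prob u -> is_prob (push u K).
Proof.
move=> sK [u0 u1]; split; last by rewrite sum_push.
by move=> z; apply: sumr_ge0 => x _; rewrite mulr_ge0 //; case: (sK x).
Qed.

Lemma l1norm_push_le u K : stochastic K -> l1norm (push u K) <= l1norm u.
Proof.
move=> sK; apply: le_trans (l1norm_sum (fun x z => u x * K x z)) _.
by apply: ler_sum => x _; rewrite l1normZ l1norm_prob ?mulr1.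
Qed.

Lemma l1norm_pushB_le u v K :
  stochastic K -> l1norm (push u K \- push v K) <= l1norm (u \- v).
Proof. by rewrite -pushB; apply: l1norm_push_le. Qed.

Lemma l1norm_push_kernelsB_le c K L B : (forall x, 0 <= c x) ->
  (forall x, l1norm (K x \- L x) <= B) ->
  l1norm (push c K \- push c L) <= (\sum_x c x) * B.
Proof.
move=> c0 KL; rewrite (eq_l1norm (g := fun z => \sum_x c x * (K x z - L x z))) => [|z].
  apply: le_trans (l1norm_sum (fun x z => c x * (K x z - L x z))) _.
  by rewrite mulr_suml; apply: ler_sum => x _; rewrite l1normZ ger0_norm ?ler_wpM2l ?KL.
by rewrite /push /= -sumrB; apply: eq_bigr => x _; rewrite mulrBr.
Qed.

Lemma l1norm_push_crossB_le u v K L a : (forall x, 0 <= u x) -> (forall x, 0 <= v x) ->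
  \sum_x u x = \sum_x v x -> (forall x y, l1norm (K x \- L y) <= 2 * a) ->
  l1norm (push u K \- push v L) <= (\sum_x u x) * (2 * a).
Proof.
move=> u0 v0 uv KL; set t := \sum_x u x.
have t0 : 0 <= t by exact: sumr_ge0.
have [tz|tpos] := eqVneq t 0.
  have u_eq0 x : u x = 0 by move/psumr_eq0P: tz; apply.
  have v_eq0 x : v x = 0 by move: tz; rewrite /t uv => /psumr_eq0P; apply.
  rewrite tz mul0r (eq_l1norm (g := fun=> 0)) => [|z].
    by rewrite /l1norm big1 // => z _; rewrite normr0.
  by rewrite /push /= !big1 ?subrr // => x _; rewrite ?u_eq0 ?v_eq0 mul0r.
have {tpos} tpos : 0 < t by rewrite lt_def tpos.
(* Both u and v have mass t, so t (uK - vL) = sum_(x,y) u x v y (K x - L y). *)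
rewrite -(ler_pM2l tpos) -[t in t * l1norm _]ger0_norm // -l1normZ.
rewrite (eq_l1norm (g := fun z => \sum_x \sum_y u x * v y * (K x z - L y z))) => [|z].
  apply: le_trans (l1norm_sum _) _.
  have -> : t * (t * (2 * a)) = \sum_x \sum_y u x * v y * (2 * a).
    rewrite {1}/t mulr_suml; apply: eq_bigr => x _.
    by rewrite /t uv mulr_suml mulr_sumr; apply: eq_bigr => y _; ring.
  apply: ler_sum => x _; apply: le_trans (l1norm_sum _) _; apply: ler_sum => y _.
  by rewrite l1normZ ger0_norm ?mulr_ge0 ?ler_wpM2l ?mulr_ge0 ?KL.
rewrite /push /= mulrBr {1}/t uv /t mulr_sumr [X in _ - X]mulr_suml -sumrB.
apply: eq_bigr => x _; rewrite mulr_suml mulr_sumr -sumrB.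
by apply: eq_bigr => y _; ring.
Qed.

Lemma l1norm_push_dobrushin u v K L a B : is_prob u -> is_prob v ->
  (forall x y, l1norm (K x \- L y) <= 2 * a) -> (forall x, l1norm (K x \- L x) <= B) ->
  l1norm (push u K \- push v L) <= a * l1norm (u \- v) + (1 - l1norm (u \- v) / 2) * B.
Proof.
move=> [u0 u1] [v0 v1] cross diag.
(* Couple u and v through their common part min(u, v). *)
pose c x := Num.min (u x) (v x); pose u' := u \- c; pose v' := v \- c.
have c0 x : 0 <= c x by rewrite le_min u0 v0.
have u'0 x : 0 <= u' x by rewrite subr_ge0 ge_min lexx.
have v'0 x : 0 <= v' x by rewrite subr_ge0 ge_min lexx orbT.
set t := \sum_x u' x.
have v't : \sum_x v' x = t by rewrite /t !sumrB u1 v1.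
have ct : \sum_x c x = 1 - t by rewrite /t sumrB u1 opprB addrC subrK.
have uv2t : l1norm (u \- v) = 2 * t.
  rewrite mulr2n mulrDl mul1r -{2}v't -big_split; apply: eq_bigr => x _ /=.
  rewrite /u' /v' /= /c; have [uv|uv] := leP (u x) (v x).
    by rewrite ler0_norm ?subr_le0 //; lra.
  by rewrite gtr0_norm ?subr_gt0 //; lra.
have uE : u = c \+ u' by apply: funext => x /=; rewrite addrC subrK.
have vE : v = c \+ v' by apply: funext => x /=; rewrite addrC subrK.
rewrite uv2t [in push u K]uE [in push v L]vE (pushD c u') (pushD c v').
rewrite (eq_l1norm (g := (push c K \- push c L) \+ (push u' K \- push v' L))) => [|z /=];
  last by ring.
apply: le_trans (l1normD _ _) _; rewrite addrC; apply: lerD.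
  apply: le_trans (l1norm_push_crossB_le u'0 v'0 (esym v't) cross) _.
  by rewrite -/t [leRHS]mulrCA mulrA mulrC.
by rewrite (mulrC 2 t) mulfK ?pnatr_eq0 // -ct l1norm_push_kernelsB_le.
Qed.

Definition centered pi g : E -> R := fun y => g y - \sum_x g x * pi x.

Lemma mean_centered pi g n (xs : 'I_n.+1 -> E) :
  (\sum_(j < n.+1) g (xs j)) / n.+1%:R - \sum_x g x * pi x =
  n.+1%:R^-1 * \sum_(j < n.+1) centered pi g (xs j).
Proof.
rewrite /centered sumrB sumr_const card_ord mulrBr mulrC.
by rewrite -(mulr_natl (\sum_x g x * pi x)) mulKf ?pnatr_eq0.
Qed.

Lemma sum_mul_centered u pi g : is_prob u -> is_prob pi ->
  \sum_y u y * centered pi g y = \sum_y (u y - pi y) * g y.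
Proof.
move=> [_ u1] [_ pi1]; under eq_bigr do rewrite mulrBr.
rewrite sumrB -mulr_suml u1 mul1r; under [RHS]eq_bigr do rewrite mulrBl.
by rewrite sumrB; congr (_ - _); apply: eq_bigr => x _; rewrite mulrC.
Qed.

End FiniteMeasures.

Section FiniteSums.
Variables (R : realType) (I : finType).
Implicit Types (w f : I -> R).

Lemma chebyshev_sum w f (eps : R) : 0 < eps -> (forall p, 0 <= w p) ->
  \sum_p (if eps < `|f p| then w p else 0) <= \sum_p w p * (f p ^+ 2 / eps ^+ 2).
Proof.
move=> eps0 w0; apply: ler_sum => p _; case: ifP => [epsf|_]; last first.
  by rewrite mulr_ge0 ?divr_ge0 ?sqr_ge0.
rewrite -[leLHS]mulr1 ler_wpM2l // ler_pdivlMr ?exprn_gt0 // mul1r.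
by rewrite -(real_normK (num_real (f p))) ler_pXn2r ?nnegrE ?(ltW eps0) ?(ltW epsf).
Qed.

Lemma sum_mul_sqr_sum w n (a : I -> 'I_n -> R) :
  \sum_p w p * (\sum_(j < n) a p j) ^+ 2 =
  \sum_(i < n) \sum_(j < n) \sum_p w p * (a p i * a p j).
Proof.
transitivity (\sum_p \sum_(i < n) \sum_(j < n) w p * (a p i * a p j)).
  apply: eq_bigr => p _; rewrite expr2 mulr_suml mulr_sumr; apply: eq_bigr => i _.
  by rewrite !mulr_sumr.
by rewrite exchange_big; apply: eq_bigr => i _; rewrite exchange_big.
Qed.

Lemma sum_mul_pair (E : finType) w (a b : I -> E) (F : E -> E -> R) :
  \sum_p w p * F (a p) (b p) =
  \sum_x \sum_y F x y * \sum_p (if (a p == x) && (b p == y) then w p else 0).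
Proof.
under [RHS]eq_bigr do under eq_bigr do rewrite mulr_sumr.
rewrite pair_bigA /= exchange_big /=; apply: eq_bigr => p _.
rewrite (bigD1 (a p, b p)) //= !eqxx mulrC big1 ?addr0 // => -[x y] /=.
by rewrite xpair_eqE ![_ == a p]eq_sym ![_ == b p]eq_sym => /negbTE->; rewrite mulr0.
Qed.

Lemma sum_shift_le (e : nat -> R) n i : (forall l, 0 <= e l) ->
  \sum_(j < n) (if (i <= j)%N then e (j - i)%N else 0) <= \sum_(l < n) e l.
Proof.
move=> e0; have [ni|/ltnW iln] := leqP n i.
  by rewrite big1 ?sumr_ge0 // => j _; rewrite leqNgt (leq_trans (ltn_ord j) ni).
rewrite -(big_mkord xpredT (fun j => if (i <= j)%N then e (j - i)%N else 0)).
rewrite -(big_mkord xpredT e) (big_cat_nat (leq0n i) iln) /= big1_seq ?add0r; last first.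
  by move=> j /andP[_]; rewrite mem_index_iota => /andP[_ ji]; rewrite leqNgt ji.
rewrite (big_cat_nat (leq0n (n - i)) (leq_subr i n)) /= -{1}(add0n i) big_addn.
rewrite (eq_bigr e) => [|j _]; last by rewrite leq_addl addnK.
by rewrite lerDl sumr_ge0.
Qed.

Lemma double_sum_sym_le n (c : nat -> nat -> R) (e b : nat -> R) :
  (forall l, 0 <= e l) -> (forall l, 0 <= b l) -> (forall i j, c i j = c j i) ->
  (forall i j, (i <= j)%N -> (j < n)%N -> `|c i j| <= e (j - i)%N + b j) ->
  \sum_(i < n) \sum_(j < n) c i j <= 2 * n%:R * \sum_(l < n) (e l + b l).
Proof.
move=> e0 b0 csym cB.
pose u i j := if (i <= j)%N then e (j - i)%N + b j else 0.
have u0 i j : 0 <= u i j by rewrite /u; case: ifP => // _; apply: addr_ge0.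
apply: (@le_trans _ _ (\sum_(i < n) \sum_(j < n) (u i j + u j i))).
  apply: ler_sum => i _; apply: ler_sum => j _; apply: le_trans (ler_norm _) _.
  have [ij|/ltnW ji] := leqP i j.
    by apply: le_trans (cB _ _ ij (ltn_ord j)) _; rewrite {1}/u ij lerDl.
  by rewrite csym; apply: le_trans (cB _ _ ji (ltn_ord i)) _; rewrite {2}/u ji lerDr.
rewrite (eq_bigr (fun i : 'I_n => \sum_(j < n) u i j + \sum_(j < n) u j i)) => [|i _];
  last by rewrite big_split.
rewrite big_split /= [X in _ + X]exchange_big /= -mulr2n -[leLHS]mulr_natl -mulrA.
rewrite ler_wpM2l // mulr_natl -[in X in _ *+ X](card_ord n) -sumr_const; apply: ler_sum => i _.
rewrite big_split (eq_bigr (fun j : 'I_n => (if (i <= j)%N then e (j - i)%N else 0) +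
                                          (if (i <= j)%N then b j else 0))) => [|j _].
  by rewrite big_split lerD ?sum_shift_le //; apply: ler_sum => j _; case: ifP.
by rewrite /u; case: ifP; rewrite ?addr0.
Qed.

End FiniteSums.

Section NonlinearFlow.
Variables (R : realType) (E : finType) (Pk : nl_kernel R E).
Hypothesis Pk_prob : forall mu x, is_prob mu -> is_prob (Pk mu x).
Implicit Types (mu nu pi u v : E -> R).

Lemma flow_prob nu n : is_prob nu -> is_prob (flow Pk nu n).
Proof.
by move=> pnu; elim: n => [|n IH] //=; exact: (push_prob (fun x => Pk_prob x IH) IH).
Qed.

Lemma kstep_stochastic nu l : is_prob nu -> stochastic (kstep Pk nu l).
Proof.
move=> pnu; elim: l => [|l IH] x /=; first exact: dirac_mass_prob.
by apply: push_prob => // y; apply/Pk_prob/flow_prob.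
Qed.

Lemma flowD nu a b : flow Pk (flow Pk nu a) b = flow Pk nu (a + b).
Proof. by elim: b => [|b IH]; rewrite ?addn0 // addnS /= IH. Qed.

Lemma push_kstepS u nu l :
  push u (kstep Pk nu l.+1) = push (push u (kstep Pk nu l)) (Pk (flow Pk nu l)).
Proof. by rewrite pushA. Qed.

Lemma push_kstepD u nu a b :
  push u (kstep Pk nu (a + b)) = push (push u (kstep Pk nu a)) (kstep Pk (flow Pk nu a) b).
Proof.
elim: b => [|b IH]; first by rewrite addn0 push_dirac.
by rewrite addnS !push_kstepS IH flowD.
Qed.

Lemma flow_kstep nu l : flow Pk nu l = push nu (kstep Pk nu l).
Proof.
by elim: l => [|l IH]; rewrite ?push_dirac // push_kstepS -IH.
Qed.

Lemma flow_invariant pi n : nl_invariant Pk pi -> flow Pk pi n = pi.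
Proof.
by move=> [_ piP]; elim: n => [|n IH] //=; rewrite IH; apply: funext => y; rewrite piP.
Qed.

Variables (k : nat) (alpha : R).
Hypothesis alpha_lt1 : alpha < 1.
Hypothesis kstep_cross : forall mu nu x y, is_prob mu -> is_prob nu ->
  tv (kstep Pk mu k x) (kstep Pk nu k y) <= 2 * (1 - alpha).

Lemma kstep_crossB mu nu x y : is_prob mu -> is_prob nu ->
  l1norm (kstep Pk mu k x \- kstep Pk nu k y) <= 2 * (1 - alpha).
Proof.
by move=> pmu pnu; rewrite -tv_l1normP ?kstep_cross //; apply: kstep_stochastic.
Qed.

Lemma push_kstep_contract nu u v : is_prob nu -> is_prob u -> is_prob v ->
  l1norm (push u (kstep Pk nu k) \- push v (kstep Pk nu k)) <=
  (1 - alpha) * l1norm (u \- v).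
Proof.
move=> pnu pu pv; rewrite -[leRHS]addr0 -(mulr0 (1 - l1norm (u \- v) / 2)).
apply: l1norm_push_dobrushin => // [x y|x]; first exact: kstep_crossB.
by rewrite (eq_l1norm (g := fun=> 0)) => [|z /=]; rewrite ?subrr // /l1norm big1 ?normr0.
Qed.

Lemma push_kstep_decay nu u v l : is_prob nu -> is_prob u -> is_prob v ->
  l1norm (push u (kstep Pk nu l) \- push v (kstep Pk nu l)) <=
  (1 - alpha) ^+ (l %/ k) * l1norm (u \- v).
Proof.
rewrite {1 2}(div.divn_eq l k); elim: (l %/ k)%N nu u v => [|q IH] nu u v pnu pu pv.
  rewrite mul0n add0n expr0 mul1r; apply: l1norm_pushB_le.
  exact: kstep_stochastic.
have pflow := flow_prob k pnu.
have [pu' pv'] : is_prob (push u (kstep Pk nu k)) /\ is_prob (push v (kstep Pk nu k)).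
  by split; apply: push_prob => //; apply: kstep_stochastic.
rewrite mulSn -addnA (push_kstepD u) (push_kstepD v); apply: le_trans (IH _ _ _ pflow pu' pv') _.
rewrite exprSr -mulrA ler_wpM2l ?exprn_ge0 ?subr_ge0 ?(ltW alpha_lt1) //.
exact: push_kstep_contract.
Qed.

Lemma kstep_cvg_flow nu l x : is_prob nu ->
  l1norm (kstep Pk nu l x \- flow Pk nu l) <= 2 * (1 - alpha) ^+ (l %/ k).
Proof.
move=> pnu; rewrite flow_kstep -[kstep _ _ _ x]push_dirac_mass mulrC.
apply: le_trans (push_kstep_decay l pnu (dirac_mass_prob _ x) pnu) _.
rewrite ler_wpM2l ?exprn_ge0 ?subr_ge0 ?(ltW alpha_lt1) //.
exact: l1normB_le2 (dirac_mass_prob _ x) pnu.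
Qed.

Lemma covariance_bound mu pi g i l : is_prob mu -> is_prob pi ->
  `|\sum_x \sum_y centered pi g x * centered pi g y *
       (flow Pk mu i x * kstep Pk (flow Pk mu i) l x y)| <=
  2 * l1norm (centered pi g) ^+ 2 * (1 - alpha) ^+ (l %/ k) +
  l1norm (centered pi g) * l1norm g * l1norm (flow Pk mu (i + l) \- pi).
Proof.
move=> pmu ppi; set h := centered pi g; set H := l1norm h; set rho := (1 - alpha) ^+ _.
have H0 : 0 <= H by exact: l1norm_ge0.
have rho0 : 0 <= rho by rewrite exprn_ge0 // subr_ge0 ltW.
have pF := flow_prob i pmu; rewrite -flowD; set F := flow Pk mu i.
have pFl := flow_prob l pF; set K := kstep Pk F l; set Fl := flow Pk F l.
have hB y : `|h y| <= H by exact: ler_norm_l1norm.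
(* Center the rows of K at their common limit Fl. *)
have -> : \sum_x \sum_y h x * h y * (F x * K x y) =
    (\sum_x F x * h x) * (\sum_y Fl y * h y) +
    \sum_x F x * (h x * \sum_y (K x y - Fl y) * h y).
  rewrite mulr_suml -big_split /=; apply: eq_bigr => x _.
  have -> : \sum_y (K x y - Fl y) * h y = \sum_y K x y * h y - \sum_y Fl y * h y.
    by rewrite -sumrB; apply: eq_bigr => y _; rewrite mulrBl.
  transitivity (F x * h x * \sum_y K x y * h y); last by ring.
  by rewrite mulr_sumr; apply: eq_bigr => y _; ring.
apply: le_trans (ler_normD _ _) _; rewrite addrC; apply: lerD.
  apply: le_trans (ler_norm_sum_l1norm (B := H * (H * (2 * rho))) _ _) _.
    move=> x; rewrite normrM ler_pM ?normr_ge0 // mulrC.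
    apply: le_trans (ler_norm_sum_l1norm _ hB) _.
    by rewrite ler_wpM2r // kstep_cvg_flow.
  have -> : 2 * H ^+ 2 * rho = H * (H * (2 * rho)) by ring.
  by rewrite l1norm_prob ?mul1r.
rewrite normrM -mulrA ler_pM ?normr_ge0 //.
  by apply: le_trans (ler_norm_sum_l1norm _ hB) _; rewrite l1norm_prob ?mul1r.
rewrite sum_mul_centered // mulrC; apply: le_trans (ler_norm_sum_l1norm _ _) _.
  exact: ler_norm_l1norm.
by rewrite mulrC.
Qed.

Variable lambda : R.
Hypothesis lambda_le : lambda <= alpha.
Hypothesis kstep_lipschitz : forall mu nu x, is_prob mu -> is_prob nu ->
  tv (kstep Pk mu k x) (kstep Pk nu k x) <= lambda * tv mu nu.

Lemma flow_contraction mu pi n : is_prob mu -> nl_invariant Pk pi ->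
  l1norm (flow Pk mu (n + k) \- pi) <=
  l1norm (flow Pk mu n \- pi) - alpha / 2 * l1norm (flow Pk mu n \- pi) ^+ 2.
Proof.
move=> pmu piI; have ppi : is_prob pi by case: piI.
have pn := flow_prob n pmu.
set D := l1norm (flow Pk mu n \- pi).
have D0 : 0 <= D by exact: l1norm_ge0.
have D2 : D <= 2 by exact: l1normB_le2.
rewrite -flowD (flow_kstep (flow Pk mu n)) -[in X in _ \- X](flow_invariant k piI).
rewrite (flow_kstep pi).
apply: le_trans (l1norm_push_dobrushin (B := lambda * D) pn ppi _ _) _.
- by move=> x y; apply: kstep_crossB.
- move=> x; have [pK pK'] := (kstep_stochastic k pn x, kstep_stochastic k ppi x).
  by rewrite -tv_l1normP // /D -tv_l1normP // kstep_lipschitz.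
(* The slack in the claimed bound is (alpha - lambda) D (1 - D/2) >= 0. *)
have : 0 <= (alpha - lambda) * ((1 - D / 2) * D).
  by rewrite !mulr_ge0 ?subr_ge0 //; lra.
rewrite -/D; nra.
Qed.

End NonlinearFlow.

Local Open Scope classical_set_scope.

Section RealSequences.
Variable R : realType.

Lemma cvg_expr_divn (r : R) k : 0 <= r -> r < 1 -> (0 < k)%N ->
  (fun l => r ^+ (l %/ k)) @ \oo --> 0.
Proof.
move=> r0 r1 k0; apply/cvgr0Pnorm_lt => e e0.
have : (GRing.exp r : R ^nat) @ \oo --> 0 by apply: cvg_expr; rewrite ger0_norm.
move=> /cvgr0Pnorm_lt/(_ e e0) [N _ rN].
by exists (N * k)%N => // l /= lN; apply: rN; rewrite /= leq_divRL.
Qed.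

Lemma cvg0_quadratic_decrease (d : R ^nat) k (c M : R) :
  (0 < k)%N -> 0 < c -> (forall n, 0 <= d n) -> (forall n, d n <= M) ->
  (forall n, d (n + k)%N <= d n - c * d n ^+ 2) -> d @ \oo --> 0.
Proof.
move=> k0 c0 d0 dM dk; apply/cvgr0Pnorm_lt => e e0.
have ce : 0 < c * e ^+ 2 by rewrite mulr_gt0 ?exprn_gt0.
have dec n : d (n + k)%N <= d n.
  by apply: le_trans (dk n) _; rewrite lerBlDr lerDl mulr_ge0 ?sqr_ge0 ?(ltW c0).
(* Along n0 + j k, d loses at least c e^2 per step for as long as it stays above e. *)
have drop j n0 : d (n0 + j * k)%N < e \/ d (n0 + j * k)%N <= M - j%:R * (c * e ^+ 2).
  elim: j => [|j [IH|IH]]; first by right; rewrite mul0n addn0 mul0r subr0.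
    by left; rewrite mulSnr addnA; apply: le_lt_trans (dec _) IH.
  have [de|ed] := ltrP (d (n0 + j * k)%N) e.
    by left; rewrite mulSnr addnA; apply: le_lt_trans (dec _) de.
  right; rewrite mulSnr addnA; apply: le_trans (dk _) _.
  have : c * e ^+ 2 <= c * d (n0 + j * k)%N ^+ 2.
    by rewrite ler_wpM2l ?(ltW c0) // ler_pXn2r ?nnegrE ?(ltW e0).
  by rewrite -natr1 mulrDl mul1r; lra.
pose m := (Num.truncn (M / (c * e ^+ 2))).+1.
have Mm : M < m%:R * (c * e ^+ 2) by rewrite -ltr_pdivrMr // truncnS_gt.
exists (m * k)%N => // n /= mn; rewrite ger0_norm //.
have [|] := drop m (n - m * k)%N; rewrite subnK //.
by have := d0 n; lra.
Qed.

End RealSequences.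

Lemma measure_fin_bigcupT d (T : measurableType d) (R : realType)
    (mu : {measure set T -> \bar R}) (I : finType) (F : I -> set T) :
  (forall i, measurable (F i)) -> trivIset setT F ->
  mu (\bigcup_i F i) = (\sum_i mu (F i))%E.
Proof.
move=> mF tF; rewrite measure_fin_bigcup //; last exact: finite_finset.
rewrite (fsbigE (index_enum I)) //; last by move=> i; rewrite mem_index_enum.
  by apply: eq_bigl => i; rewrite in_setT.
exact: index_enum_uniq.
Qed.

Section PathLaw.
Variables (R : realType) (E : finType) (Pk : nl_kernel R E) (mu : E -> R).
Variables (d : measure_display) (T : measurableType d) (P : probability T R).
Variable X : nat -> T -> E.
Hypothesis X_chain : nl_markov_chain Pk mu P X.
Implicit Types (S : nat -> pred E) (ys : nat -> E).

Definition path_weight N (p : {ffun 'I_N.+1 -> E}) : R :=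
  mu (p (inord 0)) * \prod_(i < N) Pk (flow Pk mu i) (p (inord i)) (p (inord i.+1)).

Definition cylinder N (p : {ffun 'I_N.+1 -> E}) : set T :=
  [set w | forall i, (i <= N)%N -> X i w = p (inord i)].

Lemma cylinderP N (p : {ffun 'I_N.+1 -> E}) :
  measurable (cylinder p) /\ P (cylinder p) = (path_weight p)%:E.
Proof. exact: X_chain. Qed.

Lemma path_weight_ge0 N (p : {ffun 'I_N.+1 -> E}) : 0 <= path_weight p.
Proof. by rewrite -lee_fin -(proj2 (cylinderP p)) measure_ge0. Qed.

Definition depends_on_prefix N (Q : (nat -> E) -> Prop) :=
  forall xs ys, (forall i, (i <= N)%N -> xs i = ys i) -> Q xs -> Q ys.

Section PrefixEvents.
Variables (N : nat) (Q : (nat -> E) -> Prop).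
Hypothesis Q_prefix : depends_on_prefix N Q.

Lemma prefix_eventE : [set w | Q (X^~ w)] =
  \bigcup_(p in [set p : {ffun 'I_N.+1 -> E} | Q (fun i => p (inord i))]) cylinder p.
Proof.
apply/seteqP; split=> w /=.
  move=> Qw; exists [ffun i : 'I_N.+1 => X i w] => [|i iN]; last by rewrite ffunE inordK.
  by apply: Q_prefix Qw => i iN /=; rewrite ffunE inordK.
by move=> [p Qp pw]; apply: Q_prefix Qp => i iN; rewrite pw.
Qed.

Lemma measurable_prefix_event : measurable [set w | Q (X^~ w)].
Proof.
rewrite prefix_eventE; apply: fin_bigcup_measurable; first exact: finite_finset.
by move=> p _; case: (cylinderP p).
Qed.

End PrefixEvents.

Lemma prob_prefix_event N (Q : (nat -> E) -> bool) : depends_on_prefix N Q ->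
  P [set w | Q (X^~ w)] =
  (\sum_(p : {ffun 'I_N.+1 -> E}) (if Q (fun i => p (inord i)) then path_weight p else 0))%:E.
Proof.
move=> Q_prefix; rewrite (prefix_eventE Q_prefix) bigcup_mkcond.
have memQ (p : {ffun 'I_N.+1 -> E}) :
    (p \in [set q : {ffun 'I_N.+1 -> E} | Q (fun i => q (inord i))]) = Q (fun i => p (inord i)).
  by apply/idP/idP => [/set_mem|/mem_set].
rewrite measure_fin_bigcupT => [|p|]; first last.
- move=> p q _ _ [w []]; rewrite !memQ; case: ifP => _ // pw; case: ifP => _ // qw.
  by apply/ffunP => i; rewrite -(inord_val i) -pw ?qw // -ltnS ltn_ord.
- by rewrite memQ; case: ifP => _ //; case: (cylinderP p).
rewrite -sumEFin; apply: eq_bigr => p _; rewrite memQ.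
by case: ifP => _; [case: (cylinderP p)|rewrite measure0].
Qed.

(* The forward recursion for z |-> P(X_0 \in S 0, ..., X_m \in S m, X_m = z). *)
Fixpoint filtered_flow (S : nat -> pred E) m : E -> R :=
  let nu := if m is m'.+1 then push (filtered_flow S m') (Pk (flow Pk mu m')) else mu in
  fun z => if S m z then nu z else 0.

Definition filtered_event (S : nat -> pred E) m N (ys : nat -> E) : set T :=
  [set w | (forall i, (i <= m)%N -> S i (X i w)) /\
           (forall i, (m <= i <= N)%N -> X i w = ys i)].

Lemma measurable_filtered_event S m N ys : (m <= N)%N ->
  measurable (filtered_event S m N ys).
Proof.
move=> mN; apply: (@measurable_prefix_event N (fun xs =>
  (forall i, (i <= m)%N -> S i (xs i)) /\ (forall i, (m <= i <= N)%N -> xs i = ys i))).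
move=> xs xs' xsE [Sxs xsy].
split=> i => [im|/andP[mi iN]]; rewrite -xsE ?(leq_trans im) //.
  exact: Sxs.
by apply: xsy; rewrite mi.
Qed.

Lemma filtered_event_eq0 S m N ys : (m <= N)%N -> ~~ S m (ys m) ->
  filtered_event S m N ys = set0.
Proof.
move=> mN /negP nSm; apply/seteqP; split=> // w [Sw yw]; apply: nSm.
by rewrite -yw ?leqnn ?mN //; apply: Sw.
Qed.

Lemma filtered_event0 S N ys : S 0%N (ys 0%N) ->
  filtered_event S 0 N ys = [set w | forall i, (i <= N)%N -> X i w = ys i].
Proof.
move=> S0; apply/seteqP; split=> w /= => [[_ yw] i iN|yw]; first exact: yw.
by split=> [i|i /andP[_ iN]]; [rewrite leqn0 => /eqP ->; rewrite yw|apply: yw].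
Qed.

Lemma filtered_eventS S m N ys : (m < N)%N -> S m.+1 (ys m.+1) ->
  filtered_event S m.+1 N ys =
  \bigcup_x filtered_event S m N (fun i => if i == m then x else ys i).
Proof.
move=> mN Sm; apply/seteqP; split=> w /=.
  move=> [Sw yw]; exists (X m w) => //; split=> [i im|i /andP[mi iN]].
    by apply: Sw; rewrite (leq_trans im).
  by case: eqP => [->//|/eqP im]; apply: yw; rewrite iN andbT ltn_neqAle eq_sym im mi.
move=> [x _ [Sw yw]]; have ym1 : X m.+1 w = ys m.+1 by rewrite yw ?mN ?leqnSn ?gtn_eqF.
split=> [i|i /andP[mi iN]]; first by rewrite leq_eqVlt => /orP[/eqP ->|]; [rewrite ym1|apply: Sw].
by rewrite yw ?iN ?(ltnW mi) ?gtn_eqF.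
Qed.

Lemma prob_filtered_event S m N ys : (m <= N)%N ->
  P (filtered_event S m N ys) =
  (filtered_flow S m (ys m) * \prod_(m <= i < N) Pk (flow Pk mu i) (ys i) (ys i.+1))%:E.
Proof.
elim: m ys => [|m IH] ys mN.
  have [S0|nS0] := boolP (S 0%N (ys 0%N)).
    by rewrite filtered_event0 // (proj2 (X_chain N ys)) /= S0 big_mkord.
  by rewrite filtered_event_eq0 // measure0 /= (negbTE nS0) mul0r.
have [Sm|nSm] := boolP (S m.+1 (ys m.+1)); last first.
  by rewrite filtered_event_eq0 // measure0 /= (negbTE nSm) mul0r.
pose ys' x i := if i == m then x else ys i.
rewrite filtered_eventS // measure_fin_bigcupT => [|x|]; first last.
- move=> x y _ _ [w [[_ xw] [_ yw]]]; have mmN : (m <= m <= N)%N by rewrite leqnn ltnW.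
  by move: (xw m mmN) (yw m mmN); rewrite eqxx => <-.
- exact/measurable_filtered_event/ltnW.
rewrite (eq_bigr (fun x => (filtered_flow S m x *
   \prod_(m <= i < N) Pk (flow Pk mu i) (ys' x i) (ys' x i.+1))%:E)) => [|x _]; last first.
  by have := IH (ys' x) (ltnW mN); rewrite /ys' eqxx => IHx; exact: IHx.
rewrite sumEFin /= Sm /push mulr_suml; congr EFin; apply: eq_bigr => x _.
rewrite big_ltn // /ys' eqxx gtn_eqF // mulrA; congr (_ * _).
rewrite !big_nat; apply: eq_bigr => i /andP[mi _].
by rewrite !gtn_eqF // ltnW.
Qed.

Lemma prob_filtered S N :
  P [set w | forall i, (i <= N)%N -> S i (X i w)] = (\sum_z filtered_flow S N z)%:E.
Proof.
have -> : [set w | forall i, (i <= N)%N -> S i (X i w)] =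
    \bigcup_z filtered_event S N N (fun=> z).
  apply/seteqP; split=> [w Sw|w [z _ []] //]; exists (X N w) => //; split=> // i.
  by rewrite -eqn_leq => /eqP ->.
rewrite measure_fin_bigcupT => [|z|]; first last.
- by move=> x y _ _ [w [[_ xw] [_ yw]]]; rewrite -(xw N) ?(yw N) ?leqnn.
- exact: measurable_filtered_event.
rewrite -sumEFin; apply: eq_bigr => z _.
by have := prob_filtered_event S (fun=> z) (leqnn N); rewrite big_geq // mulr1 => Pz; exact: Pz.
Qed.

Lemma filtered_flow_free S a l : (forall m z, (a < m <= a + l)%N -> S m z) ->
  filtered_flow S (a + l) = push (filtered_flow S a) (kstep Pk (flow Pk mu a) l).
Proof.
elim: l => [|l IH] Sfree; first by rewrite addn0 push_dirac.
rewrite addnS push_kstepS -IH => [|m z /andP[am ml]]; last first.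
  by apply: Sfree; rewrite am (leq_trans ml) // leq_add2l.
by rewrite flowD; apply: funext => z /=; rewrite Sfree // addnS ltnS leq_addr leqnn.
Qed.

Lemma filtered_flow_prefix_free S m : (forall i z, (i < m)%N -> S i z) ->
  filtered_flow S m = fun z => if S m z then flow Pk mu m z else 0.
Proof.
elim: m => [|m IH] Sfree //; rewrite /= (_ : filtered_flow S m = flow Pk mu m) //.
rewrite IH => [|i z im]; last by apply: Sfree; rewrite ltnS ltnW.
by apply: funext => z; rewrite Sfree.
Qed.

Hypothesis Pk_prob : forall nu x, is_prob nu -> is_prob (Pk nu x).
Hypothesis mu_prob : is_prob mu.

Definition pair_constraint i j (x y : E) : nat -> pred E :=
  fun m z => ((m == i) ==> (z == x)) && ((m == j) ==> (z == y)).

Lemma filtered_flow_pair N i j x y : (i <= j <= N)%N ->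
  \sum_z filtered_flow (pair_constraint i j x y) N z =
  flow Pk mu i x * kstep Pk (flow Pk mu i) (j - i) x y.
Proof.
move=> /andP[ij jN]; set S := pair_constraint i j x y.
have Si : filtered_flow S i = fun z => if S i z then flow Pk mu i z else 0.
  apply: filtered_flow_prefix_free => m z mi.
  by rewrite /S /pair_constraint (ltn_eqF mi) (ltn_eqF (leq_trans mi ij)).
rewrite -(subnKC jN) filtered_flow_free => [|m z /andP[jm _]]; last first.
  by rewrite /S /pair_constraint (gtn_eqF jm) (gtn_eqF (leq_ltn_trans ij jm)).
rewrite sum_push; last exact/kstep_stochastic/flow_prob.
have [eij|nij] := eqVneq i j.
  rewrite -eij subnn Si /S /pair_constraint -eij eqxx (bigD1 x) //= eqxx.
  rewrite big1 ?addr0 => [|z /negbTE-> //].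
  by case: (x == y); rewrite ?mulr1 ?mulr0.
have {nij}ij : (i < j)%N by rewrite ltn_neqAle nij ij.
have j0 : (0 < j)%N := leq_ltn_trans (leq0n i) ij.
have Sj z : filtered_flow S j z =
    if z == y then push (filtered_flow S j.-1) (Pk (flow Pk mu j.-1)) z else 0.
  by rewrite -[in LHS](prednK j0) /= prednK // /S /pair_constraint (gtn_eqF ij) eqxx.
rewrite (eq_bigr _ (fun z _ => Sj z)) (bigD1 y) //= eqxx big1 ?addr0 => [|z /negbTE-> //].
have ij1 : (i <= j.-1)%N by rewrite -ltnS prednK.
rewrite -(subnKC ij1) filtered_flow_free => [|m z /andP[im mj]]; last first.
  rewrite subnKC // in mj; have mj' : (m < j)%N by rewrite (leq_ltn_trans mj) ?ltn_predL.
  by rewrite /S /pair_constraint (gtn_eqF im) (ltn_eqF mj').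
rewrite -flowD -push_kstepS -subSn // prednK // Si /push (bigD1 x) //= big1 ?addr0.
  by rewrite /S /pair_constraint !eqxx (ltn_eqF ij).
by move=> z zx; rewrite /S /pair_constraint eqxx (negbTE zx) (ltn_eqF ij) mul0r.
Qed.

Lemma path_weight_pair N i j x y : (i <= j <= N)%N ->
  \sum_(p : {ffun 'I_N.+1 -> E})
     (if (p (inord i) == x) && (p (inord j) == y) then path_weight p else 0) =
  flow Pk mu i x * kstep Pk (flow Pk mu i) (j - i) x y.
Proof.
move=> ijN; have /andP[ij jN] := ijN; rewrite -(filtered_flow_pair x y ijN).
have Q_prefix : depends_on_prefix N (fun xs => (xs i == x) && (xs j == y)).
  by move=> xs ys xys; rewrite !xys ?(leq_trans ij).
apply/EFin_inj; rewrite -(prob_prefix_event Q_prefix) -prob_filtered; congr (P _).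
apply/seteqP; split=> w /= => [/andP[/eqP wx /eqP wy] m mN|Sw].
  by apply/andP; split; apply/implyP => /eqP ->; rewrite ?wx ?wy.
have /andP[+ _] := Sw i (leq_trans ij jN); have /andP[_ +] := Sw j jN.
by rewrite !eqxx /= => -> ->.
Qed.

Lemma sum_path_weight_mul N (h : E -> R) i j : (i <= j <= N)%N ->
  \sum_(p : {ffun 'I_N.+1 -> E}) path_weight p * (h (p (inord i)) * h (p (inord j))) =
  \sum_x \sum_y h x * h y * (flow Pk mu i x * kstep Pk (flow Pk mu i) (j - i) x y).
Proof.
move=> ijN; rewrite (sum_mul_pair (@path_weight N) (fun p => p (inord i))
  (fun p => p (inord j)) (fun x y => h x * h y)).
by apply: eq_bigr => x _; apply: eq_bigr => y _; rewrite path_weight_pair.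
Qed.

End PathLaw.

Section LawOfLargeNumbers.
Variables (R : realType) (E : finType) (Pk : nl_kernel R E).
Hypothesis Pk_prob : forall nu x, is_prob nu -> is_prob (Pk nu x).
Variables (k : nat) (alpha : R).
Hypothesis alpha_lt1 : alpha < 1.
Hypothesis kstep_cross : forall mu nu x y, is_prob mu -> is_prob nu ->
  tv (kstep Pk mu k x) (kstep Pk nu k y) <= 2 * (1 - alpha).
Variables (pi g mu : E -> R).
Hypotheses (pi_prob : is_prob pi) (mu_prob : is_prob mu).
Variables (d : measure_display) (T : measurableType d) (P : probability T R).
Variable X : nat -> T -> E.
Hypothesis X_chain : nl_markov_chain Pk mu P X.

Definition covariance_rate l : R :=
  2 * l1norm (centered pi g) ^+ 2 * (1 - alpha) ^+ (l %/ k) +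
  l1norm (centered pi g) * l1norm g * l1norm (flow Pk mu l \- pi).

Lemma path_covariance_le N i j : (i <= j <= N)%N ->
  `|\sum_(p : {ffun 'I_N.+1 -> E})
      path_weight Pk mu p * (centered pi g (p (inord i)) * centered pi g (p (inord j)))| <=
  2 * l1norm (centered pi g) ^+ 2 * (1 - alpha) ^+ ((j - i) %/ k) +
  l1norm (centered pi g) * l1norm g * l1norm (flow Pk mu j \- pi).
Proof.
move=> ijN; have /andP[ij _] := ijN; rewrite (sum_path_weight_mul X_chain Pk_prob mu_prob) //.
have := covariance_bound Pk_prob alpha_lt1 kstep_cross g i (j - i) mu_prob pi_prob.
by rewrite subnKC.
Qed.

Lemma prob_deviation_le (eps : R) n : 0 < eps ->
  (P [set w | (eps < `|(\sum_(j < n.+1) g (X j w)) / n.+1%:R - \sum_x g x * pi x|)%R] <=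
   (2 / eps ^+ 2 * arithmetic_mean covariance_rate n)%R%:E)%E.
Proof.
move=> eps0; set N := n.+1; set m := \sum_x g x * pi x.
pose f (xs : nat -> E) := (\sum_(j < N) g (xs j)) / N%:R - m.
have Q_prefix : depends_on_prefix N (fun xs => eps < `|f xs|).
  move=> xs ys xys; rewrite /f (eq_bigr (fun j : 'I_N => g (ys j))) // => j _.
  by rewrite xys // ltnW.
rewrite (prob_prefix_event X_chain Q_prefix) lee_fin.
apply: le_trans (chebyshev_sum (fun p : {ffun 'I_N.+1 -> E} => f (fun i => p (inord i)))
  eps0 (fun p => path_weight_ge0 X_chain p)) _.
pose h := centered pi g.
have fE (p : {ffun 'I_N.+1 -> E}) :
    f (fun i => p (inord i)) = N%:R^-1 * \sum_(j < N) h (p (inord j)).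
  exact: (mean_centered pi g (fun j => p (inord j))).
pose c i j := \sum_(p : {ffun 'I_N.+1 -> E})
  path_weight Pk mu p * (h (p (inord i)) * h (p (inord j))).
pose K := N%:R^-1 ^+ 2 / eps ^+ 2.
have -> : \sum_(p : {ffun 'I_N.+1 -> E})
      path_weight Pk mu p * (f (fun i => p (inord i)) ^+ 2 / eps ^+ 2) =
    K * \sum_(i < N) \sum_(j < N) c i j.
  rewrite /c -(@sum_mul_sqr_sum _ _ (@path_weight _ _ Pk mu N) N (fun p j => h (p (inord j)))).
  rewrite mulr_sumr.
  by apply: eq_bigr => p _; rewrite fE /K; ring.
pose e l := 2 * l1norm h ^+ 2 * (1 - alpha) ^+ (l %/ k).
pose b l := l1norm h * l1norm g * l1norm (flow Pk mu l \- pi).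
have e0 l : 0 <= e l by rewrite !mulr_ge0 ?exprn_ge0 ?l1norm_ge0 ?subr_ge0 ?(ltW alpha_lt1).
have b0 l : 0 <= b l by rewrite !mulr_ge0 ?l1norm_ge0.
have csym i j : c i j = c j i by apply: eq_bigr => p _; rewrite (mulrC (h _)).
have cB i j : (i <= j)%N -> (j < N)%N -> `|c i j| <= e (j - i)%N + b j.
  by move=> ij jN; apply: path_covariance_le; rewrite ij ltnW.
apply: le_trans (ler_wpM2l _ (double_sum_sym_le e0 b0 csym cB)) _.
  by rewrite divr_ge0 ?exprn_ge0 ?invr_ge0 ?ler0n ?(ltW eps0).
rewrite /arithmetic_mean /series /= big_mkord -/N.
suff -> : K * (2 * N%:R * \sum_(l < N) (e l + b l)) =
    2 / eps ^+ 2 * (N%:R^-1 * \sum_(l < N) covariance_rate l) by rewrite lexx.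
by rewrite /K; field; rewrite pnatr_eq0 (gt_eqF eps0).
Qed.

Hypotheses (k_gt0 : (0 < k)%N) (alpha_gt0 : 0 < alpha).
Variable lambda : R.
Hypothesis lambda_le : lambda <= alpha.
Hypothesis kstep_lipschitz : forall mu nu x, is_prob mu -> is_prob nu ->
  tv (kstep Pk mu k x) (kstep Pk nu k x) <= lambda * tv mu nu.
Hypothesis pi_invariant : nl_invariant Pk pi.

Lemma covariance_rate_cvg0 : covariance_rate @ \oo --> 0.
Proof.
rewrite -[0]addr0; apply: cvgD.
  rewrite -(mulr0 (2 * l1norm (centered pi g) ^+ 2)); apply: cvgMl_tmp.
  by apply: cvg_expr_divn; rewrite ?subr_ge0 ?(ltW alpha_lt1) // ltrBlDr ltrDl.
rewrite -(mulr0 (l1norm (centered pi g) * l1norm g)); apply: cvgMl_tmp.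
apply: (@cvg0_quadratic_decrease _ _ k (alpha / 2) 2) => // [|n|n|n].
- by rewrite divr_gt0.
- exact: l1norm_ge0.
- by apply: l1normB_le2 => //; apply: flow_prob.
- exact: (flow_contraction Pk_prob kstep_cross lambda_le kstep_lipschitz n
    mu_prob pi_invariant).
Qed.

End LawOfLargeNumbers.

Theorem theorem3 (R : realType) (E : finType) (Pk : nl_kernel R E)
  (Pk_prob : forall mu x, is_prob mu -> is_prob (Pk mu x))
  (k : nat) (k_ge1 : (1 <= k)%N)
  (alpha_k lambda_k lambda_1 : R)
  (alpha_k_gt0 : 0 < alpha_k) (alpha_k_lt1 : alpha_k < 1)
  (hi : forall mu nu x y, is_prob mu -> is_prob nu ->
          tv (kstep Pk mu k x) (kstep Pk nu k y) <= 2 * (1 - alpha_k))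
  (lambda_k_ge0 : 0 <= lambda_k) (lambda_k_le : lambda_k <= alpha_k)
  (hii : forall mu nu x, is_prob mu -> is_prob nu ->
          tv (kstep Pk mu k x) (kstep Pk nu k x) <= lambda_k * tv mu nu)
  (hiii : forall mu nu x, is_prob mu -> is_prob nu ->
          tv (Pk mu x) (Pk nu x) <= lambda_1 * tv mu nu)
  (pi : E -> R) (pi_inv : nl_invariant Pk pi)
  (g : E -> R) (mu : E -> R) (mu_prob : is_prob mu)
  (d : measure_display) (T : measurableType d) (P : probability T R)
  (X : nat -> T -> E) (X_chain : nl_markov_chain Pk mu P X) :
  forall eps : R, 0 < eps ->
    (fun n : nat =>
       P [set w | eps < `| (\sum_(j < n) g (X j w)) / n%:R - \sum_(x : E) g x * pi x |])
      @ \oo --> (0 : \bar R)%E.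
Proof.
move=> eps eps0; have pi_prob : is_prob pi by case: pi_inv.
pose rate := covariance_rate Pk k alpha_k pi g mu.
have rate_cvg : (fun n => (2 / eps ^+ 2 * arithmetic_mean rate n)%:E) @ \oo --> 0%E.
  apply: cvg_EFin; first exact: nearW.
  rewrite -(mulr0 (2 / eps ^+ 2)); apply: cvgMl_tmp; apply: cesaro.
  exact: (covariance_rate_cvg0 Pk_prob alpha_k_lt1 hi g pi_prob mu_prob k_ge1 alpha_k_gt0
    lambda_k_le hii pi_inv).
rewrite -cvg_shiftS; apply: (squeeze_cvge _ (cvg_cst 0%E) rate_cvg).
apply: nearW => n; rewrite /= measure_ge0 /=.
exact: (prob_deviation_le Pk_prob alpha_k_lt1 hi g pi_prob mu_prob X_chain n eps0).
Qed.
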